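(* For any $w>0$ and $\rho\ge 2w$, there exists a partition of a disk of radius $\rho$ in $\mathbb{R}^2$ into convex cells such that each cell has diameter at most $8w$ and area at least $w^2/8$. *)

From HB Require Import structures.
From mathcomp Require Import all_boot all_order all_algebra.
From mathcomp Require Import all_classical all_reals all_analysis.
Set Implicit Arguments. Unset Strict Implicit. Unset Printing Implicit Defensive.
Import Order.TTheory GRing.Theory Num.Theory.
Local Open Scope classical_set_scope.
Local Open Scope ring_scope.

Definition dist2 {R : realType} (x y : R * R) : R :=
  Num.sqrt ((x.1 - y.1) ^+ 2 + (x.2 - y.2) ^+ 2).

Definition disk {R : realType} (rho : R) : set (R * R) :=
  [set x | dist2 x (0, 0) <= rho].

Definition convex2 {R : realType} (C : set (R * R)) : Prop :=
  forall x y t, C x -> C y -> 0 <= t <= 1 ->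
    C (t * x.1 + (1 - t) * y.1, t * x.2 + (1 - t) * y.2).

Definition diam_le {R : realType} (C : set (R * R)) (d : R) : Prop :=
  forall x y, C x -> C y -> dist2 x y <= d.

Definition interior2 {R : realType} (C : set (R * R)) : set (R * R) :=
  [set x | exists2 e : R, 0 < e & forall y, dist2 x y < e -> C y].

Definition area {R : realType} : set (R * R) -> \bar R :=
  ((@lebesgue_measure R) \x (@lebesgue_measure R))%E.

(* Let a = ρ/√2, so that [-a, a]² is the square inscribed in the disk, and
   cut [-a, a] into intervals I_k of length h ∈ [s, 2s), where s = 5w/4.
   The rectangle [-G_k, G_k] × I_k ⊇ [-a, a] × I_k lies inside the disk; it is
   cut vertically at spacing in [s, 2s), and the two outer cells also take the
   rest of the strip within the disk.  Above the square, the column I_k × [a, ρ]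
   is cut horizontally at spacing in [3s/16, s], the last cell taking what
   remains of the disk; this works because over the middle half of I_k the disk
   reaches height at least a + 3h/16.  The part below the square is symmetric.
   Every cell is the disk cut by a box, hence convex; it lies in a box of size
   at most 6s × 2s or 2s × 3s, so its diameter is at most √40 s < 8w, and it
   contains a box of area at least (h/2)(3s/16) ≥ 3s²/32 > w²/8. *)
From HB Require Import structures.
From mathcomp Require Import all_boot all_order all_algebra.
From mathcomp Require Import all_classical all_reals all_analysis.
From mathcomp Require Import ring lra.
Import Order.TTheory GRing.Theory Num.Theory.
Local Open Scope classical_set_scope.
Local Open Scope ring_scope.

Section RealFacts.
Context {R : realType}.

Lemma le_of_sqr_le (x y : R) : 0 <= y -> x ^+ 2 <= y ^+ 2 -> x <= y.
Proof.
move=> y0 h; apply: (le_trans (ler_norm x)).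
by rewrite -sqrtr_sqr -(ger0_norm y0) -sqrtr_sqr ler_wsqrtr.
Qed.

Lemma sqr_le_of_norm_le (x b : R) : `|x| <= b -> x ^+ 2 <= b ^+ 2.
Proof.
move=> h; have b0 : 0 <= b by apply: le_trans h.
by rewrite -(ger0_norm (sqr_ge0 x)) normrX ler_pXn2r // ?nnegrE.
Qed.

Lemma norm_le (x b : R) : - b <= x -> x <= b -> `|x| <= b.
Proof. by move=> h1 h2; rewrite ler_norml h1 h2. Qed.

Lemma sqrtr_ge (y z : R) : 0 <= y -> y ^+ 2 <= z -> y <= Num.sqrt z.
Proof. by move=> y0 h; rewrite -(ger0_norm y0) -sqrtr_sqr ler_wsqrtr. Qed.

Lemma sqrtr_le (y z : R) : 0 <= y -> z <= y ^+ 2 -> Num.sqrt z <= y.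
Proof. by move=> y0 h; rewrite -(ger0_norm y0) -sqrtr_sqr ler_wsqrtr. Qed.

Lemma sqr_convex_le (t a b : R) : 0 <= t <= 1 ->
  (t * a + (1 - t) * b) ^+ 2 <= t * a ^+ 2 + (1 - t) * b ^+ 2.
Proof.
move=> /andP[t0 t1].
have -> : t * a ^+ 2 + (1 - t) * b ^+ 2
    = (t * a + (1 - t) * b) ^+ 2 + t * (1 - t) * (a - b) ^+ 2 by ring.
by rewrite lerDl mulr_ge0 ?sqr_ge0 // mulr_ge0 // subr_ge0.
Qed.

Lemma convex_comb_itv (t a b lo hi : R) : 0 <= t <= 1 ->
  lo <= a <= hi -> lo <= b <= hi -> lo <= t * a + (1 - t) * b <= hi.
Proof.
move=> /andP[t0 t1] /andP[a0 a1] /andP[b0 b1].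
have h1 : t * lo <= t * a by rewrite ler_wpM2l.
have h2 : t * a <= t * hi by rewrite ler_wpM2l.
have h3 : (1 - t) * lo <= (1 - t) * b by rewrite ler_wpM2l ?subr_ge0.
have h4 : (1 - t) * b <= (1 - t) * hi by rewrite ler_wpM2l ?subr_ge0.
apply/andP; split; lra.
Qed.

Lemma sqr_add_le (x y a b : R) : 0 <= x <= a -> 0 <= y <= b ->
  x ^+ 2 + y ^+ 2 <= a ^+ 2 + b ^+ 2.
Proof.
move=> /andP[x0 xa] /andP[y0 yb].
have a0 : 0 <= a by apply: le_trans xa.
have b0 : 0 <= b by apply: le_trans yb.
by apply: lerD; rewrite ler_pXn2r.
Qed.

Lemma grid_index (b d y : R) (n : nat) : 0 < d -> (0 < n)%N -> b <= y ->
  exists j, [/\ (j < n)%N, b + j%:R * d <= y & j.+1 = n \/ y <= b + j.+1%:R * d].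
Proof.
move=> d0 n0 hby.
have t0 : 0 <= (y - b) / d by rewrite divr_ge0 //; lra.
have /andP[t1 t2] := truncn_itv t0.
rewrite ler_pdivlMr // in t1; rewrite ltr_pdivrMr // in t2.
case: (ltnP (Num.truncn ((y - b) / d)) n) => hT.
  by exists (Num.truncn ((y - b) / d)); split => //; [lra | right; lra].
exists n.-1; split; first by rewrite prednK.
  have : n.-1%:R * d <= (Num.truncn ((y - b) / d))%:R * d.
    by rewrite ler_wpM2r ?ler_nat; [| lra | exact: leq_trans (leq_pred n) hT].
  lra.
by left; rewrite prednK.
Qed.

End RealFacts.

(* ((x0, x1), (y0, y1)) stands for the box [x0, x1] × [y0, y1]. *)
Definition rect (R : Type) : Type := (R * R) * (R * R).

Section DiskAndBoxes.
Context {R : realType}.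

Definition box (x0 x1 y0 y1 : R) : set (R * R) :=
  [set p | (x0 <= p.1 <= x1) /\ (y0 <= p.2 <= y1)].

Lemma boxE (x0 x1 y0 y1 : R) : box x0 x1 y0 y1 = `[x0, x1] `*` `[y0, y1].
Proof. by apply/seteqP; split => p /=; rewrite /box /= !in_itv. Qed.

Lemma diskE (rho : R) (p : R * R) : 0 <= rho ->
  disk rho p <-> p.1 ^+ 2 + p.2 ^+ 2 <= rho ^+ 2.
Proof.
move=> hr; rewrite /disk /= /dist2 !subr0.
by rewrite -{1}(ger0_norm hr) -sqrtr_sqr ler_sqrt ?exprn_ge0.
Qed.

Lemma disk_norm_le (rho : R) p : 0 <= rho -> disk rho p ->
  `|p.1| <= rho /\ `|p.2| <= rho.
Proof.
move=> r0 /(diskE _ _ r0) h.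
have := sqr_ge0 p.1; have := sqr_ge0 p.2 => h1 h2.
by split; apply: le_of_sqr_le; rewrite // -normrX ger0_norm ?sqr_ge0 //; lra.
Qed.

Lemma convex2_disk (rho : R) : 0 <= rho -> convex2 (disk rho).
Proof.
move=> hr x y t /(diskE _ _ hr) hx /(diskE _ _ hr) hy ht.
apply/(diskE _ _ hr) => /=.
have h1 := sqr_convex_le t x.1 y.1 ht; have h2 := sqr_convex_le t x.2 y.2 ht.
case/andP: ht => t0 t1.
have h3 : t * (x.1 ^+ 2 + x.2 ^+ 2) <= t * rho ^+ 2 by rewrite ler_wpM2l.
have h4 : (1 - t) * (y.1 ^+ 2 + y.2 ^+ 2) <= (1 - t) * rho ^+ 2.
  by rewrite ler_wpM2l ?subr_ge0.
lra.
Qed.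

Lemma convex2_box (x0 x1 y0 y1 : R) : convex2 (box x0 x1 y0 y1).
Proof. by move=> x y t [? ?] [? ?] ht; split; apply: convex_comb_itv. Qed.

Lemma convex2I (A B : set (R * R)) : convex2 A -> convex2 B -> convex2 (A `&` B).
Proof. by move=> cA cB x y t [? ?] [? ?] ht; split; [apply: cA | apply: cB]. Qed.

Lemma measurable_box (x0 x1 y0 y1 : R) : measurable (box x0 x1 y0 y1).
Proof. by rewrite boxE; apply: measurableX; apply: measurable_itv. Qed.

Lemma measurable_disk (rho : R) : 0 <= rho -> measurable (disk rho).
Proof.
move=> hr.
have mf : measurable_fun setT (fun p : R * R => p.1 * p.1 + p.2 * p.2).
  by apply: measurable_realfun.measurable_funD;
    apply: measurable_realfun.measurable_funM;
    [exact: measurable_fst | exact: measurable_fst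
    | exact: measurable_snd | exact: measurable_snd].
have := mf measurableT _ (measurable_itv `]-oo, rho ^+ 2]).
rewrite setTI; congr measurable; apply/seteqP; split => p /=; rewrite /preimage /=.
  by rewrite in_itv /= -!expr2 => /(diskE _ _ hr).
by move/(diskE _ _ hr); rewrite in_itv /= -!expr2.
Qed.

Lemma dist2_shiftx (p : R * R) d : dist2 p (p.1 + d, p.2) = `|d|.
Proof.
rewrite /dist2 /=.
have -> : (p.1 - (p.1 + d)) ^+ 2 + (p.2 - p.2) ^+ 2 = d ^+ 2 by ring.
exact: sqrtr_sqr.
Qed.

Lemma dist2_shifty (p : R * R) d : dist2 p (p.1, p.2 + d) = `|d|.
Proof.
rewrite /dist2 /=.
have -> : (p.1 - p.1) ^+ 2 + (p.2 - (p.2 + d)) ^+ 2 = d ^+ 2 by ring.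
exact: sqrtr_sqr.
Qed.

Lemma interior2_sub_box (C : set (R * R)) x0 x1 y0 y1 p :
  C `<=` box x0 x1 y0 y1 -> interior2 C p -> (x0 < p.1 < x1) /\ (y0 < p.2 < y1).
Proof.
move=> sub [e e0 he].
have e20 : 0 < e / 2 by rewrite divr_gt0.
have lte : `|e / 2| < e by rewrite gtr0_norm // ltr_pdivrMr // ltr_pMr //; lra.
have lte' : `|- (e / 2)| < e by rewrite normrN.
have [/andP[a1 _] _] := sub _ (he _ (eq_ind_r (fun z => z < e) lte' (dist2_shiftx p _))).
have [/andP[_ a2] _] := sub _ (he _ (eq_ind_r (fun z => z < e) lte (dist2_shiftx p _))).
have [_ /andP[b1 _]] := sub _ (he _ (eq_ind_r (fun z => z < e) lte' (dist2_shifty p _))).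
have [_ /andP[_ b2]] := sub _ (he _ (eq_ind_r (fun z => z < e) lte (dist2_shifty p _))).
rewrite /= in a1 a2 b1 b2.
by split; apply/andP; split; lra.
Qed.

Lemma diam_le_sub_box (C : set (R * R)) x0 x1 y0 y1 d :
  C `<=` box x0 x1 y0 y1 -> 0 <= d ->
  (x1 - x0) ^+ 2 + (y1 - y0) ^+ 2 <= d ^+ 2 -> diam_le C d.
Proof.
move=> sub d0 hd p q /sub [/andP[p1 p2] /andP[p3 p4]] /sub [/andP[q1 q2] /andP[q3 q4]].
rewrite /dist2 -(ger0_norm d0) -sqrtr_sqr ler_sqrt ?sqr_ge0 //.
have h1 : (p.1 - q.1) ^+ 2 <= (x1 - x0) ^+ 2 by nra.
have h2 : (p.2 - q.2) ^+ 2 <= (y1 - y0) ^+ 2 by nra.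
lra.
Qed.

Lemma area_ge_box (C : set (R * R)) x0 x1 y0 y1 (A : R) :
  measurable C -> box x0 x1 y0 y1 `<=` C -> x0 < x1 -> y0 < y1 ->
  A <= (x1 - x0) * (y1 - y0) -> (A%:E <= area C)%E.
Proof.
move=> mC sub h1 h2 hA.
have areaE : area (box x0 x1 y0 y1) = ((x1 - x0) * (y1 - y0))%:E.
  rewrite boxE /area product_measure1E; try exact: measurable_itv.
  transitivity (lebesgue_measure `[x0, x1] * lebesgue_measure `[y0, y1])%E => //.
  by rewrite !lebesgue_measure_itv /= !lte_fin h1 h2 -EFinM.
apply: le_trans (_ : ((x1 - x0) * (y1 - y0))%:E <= area C)%E; first by rewrite lee_fin.
rewrite -areaE /area; apply: le_measure => //; rewrite inE //; exact: measurable_box.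
Qed.

Definition rect_set (r : rect R) := box r.1.1 r.1.2 r.2.1 r.2.2.

Definition apart (r r' : rect R) : Prop :=
  r.1.2 <= r'.1.1 \/ r'.1.2 <= r.1.1 \/ r.2.2 <= r'.2.1 \/ r'.2.2 <= r.2.1.

Lemma apart_sym (r r' : rect R) : apart r r' -> apart r' r.
Proof. by rewrite /apart; tauto. Qed.

Lemma measurable_disk_rect (rho : R) (r : rect R) : 0 <= rho ->
  measurable (disk rho `&` rect_set r).
Proof.
by move=> r0; apply: measurableI; [exact: measurable_disk | exact: measurable_box].
Qed.

Lemma interior2_disk_rect_disjoint (rho : R) (r r' : rect R) : apart r r' ->
  interior2 (disk rho `&` rect_set r) `&` interior2 (disk rho `&` rect_set r') = set0.
Proof.
move=> hs; apply/seteqP; split => // p [h1 h2].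
have [/andP[a1 a2] /andP[a3 a4]] := interior2_sub_box _ _ _ _ _ _ (@subIsetr _ _ _) h1.
have [/andP[b1 b2] /andP[b3 b4]] := interior2_sub_box _ _ _ _ _ _ (@subIsetr _ _ _) h2.
by case: hs => [|[|[|]]] h; lra.
Qed.

End DiskAndBoxes.

Definition half_side {R : realType} (rho : R) := Num.sqrt (rho ^+ 2 / 2).

Lemma half_side_ge0 {R : realType} (rho : R) : 0 <= half_side rho.
Proof. exact: sqrtr_ge0. Qed.

Lemma half_side_sqr {R : realType} (rho : R) : half_side rho ^+ 2 = rho ^+ 2 / 2.
Proof. by rewrite sqr_sqrtr // divr_ge0 // sqr_ge0. Qed.

Section Grid.
Context {R : realType}.
Variables s rho : R.
Hypotheses (s_gt0 : 0 < s) (s_le_half_side : s <= half_side rho) (rho_ge0 : 0 <= rho).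

Definition nstrips : nat := Num.truncn (2 * half_side rho / s).
Definition strip_h := 2 * half_side rho / nstrips%:R.
Definition strip_lo (k : nat) := - half_side rho + k%:R * strip_h.

(* In strip k, [strip_ymax k] bounds |y|, so [-strip_halfw k, strip_halfw k]
   times the strip lies in the disk. *)
Definition strip_ymax k := Num.max `|strip_lo k| `|strip_lo k + strip_h|.
Definition strip_halfw k := Num.sqrt (rho ^+ 2 - strip_ymax k ^+ 2).
Definition nrow k : nat := Num.truncn (2 * strip_halfw k / s).
Definition row_w k := 2 * strip_halfw k / (nrow k)%:R.
Definition row_cut k (j : nat) := - strip_halfw k + j%:R * row_w k.

(* Over the middle half of the interval of strip k, |x| <= cap_xmax k, so the
   disk reaches height cap_top k there. *)
Definition strip_mid k := strip_lo k + strip_h / 2.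
Definition cap_xmax k := `|strip_mid k| + strip_h / 4.
Definition cap_top k := Num.sqrt (rho ^+ 2 - cap_xmax k ^+ 2).
Definition cap_depth k := cap_top k - half_side rho.
Definition ncap k : nat := (Num.truncn (cap_depth k / s)).+1.
Definition cap_h k := cap_depth k / (ncap k)%:R.

Lemma nstrips_ge2 : (2 <= nstrips)%N.
Proof.
have sa := s_le_half_side.
have t0 : 0 <= 2 * half_side rho / s by rewrite divr_ge0 ?mulr_ge0 ?half_side_ge0 // ltW.
have /andP[_ h2] := truncn_itv t0.
have h3 : 2 <= 2 * half_side rho / s by rewrite ler_pdivlMr //; lra.
have : (2%:R : R) < nstrips.+1%:R by apply: le_lt_trans h2.
by rewrite ltr_nat.
Qed.

Lemma strip_hP :
  [/\ nstrips%:R * strip_h = 2 * half_side rho, s <= strip_h, strip_h < 2 * s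
    & strip_h <= half_side rho].
Proof.
have s0 := s_gt0; have sa := s_le_half_side.
have t0 : 0 <= 2 * half_side rho / s by rewrite divr_ge0 ?mulr_ge0 ?half_side_ge0 // ltW.
have /andP[k1 k2] := truncn_itv t0.
rewrite -/nstrips ler_pdivlMr // in k1.
rewrite -/nstrips ltr_pdivrMr // -natr1 mulrDl mul1r in k2.
have K2 : 2 <= nstrips%:R :> R by rewrite (ler_nat R 2) nstrips_ge2.
have a0 := half_side_ge0 rho.
rewrite /strip_h; split.
- by rewrite mulrC divfK // pnatr_eq0 -lt0n (leq_trans _ nstrips_ge2).
- by rewrite ler_pdivlMr //; lra.
- by rewrite ltr_pdivrMr; lra.
- rewrite ler_pdivrMr; last by lra.
  have : half_side rho * 2 <= half_side rho * nstrips%:R by rewrite ler_wpM2l.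
  lra.
Qed.

Lemma strip_lo_bounds {k : nat} : (k < nstrips)%N ->
  - half_side rho <= strip_lo k /\ strip_lo k + strip_h <= half_side rho.
Proof.
move=> kK; have s0 := s_gt0; have [hK hs _ _] := strip_hP.
have k0 : 0 <= k%:R * strip_h by rewrite mulr_ge0 //; lra.
have k1 : k.+1%:R * strip_h <= nstrips%:R * strip_h by rewrite ler_wpM2r ?ler_nat //; lra.
rewrite /strip_lo; split; first lra.
by move: k1; rewrite -natr1 mulrDl mul1r; lra.
Qed.

Lemma strip_lo_lt k k' : (k < k')%N -> strip_lo k + strip_h <= strip_lo k'.
Proof.
move=> kk; have s0 := s_gt0; have [_ hs _ _] := strip_hP.
have : k.+1%:R * strip_h <= k'%:R * strip_h by rewrite ler_wpM2r ?ler_nat //; lra.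
by rewrite /strip_lo -natr1 mulrDl mul1r; lra.
Qed.

Lemma strip_index {x : R} : - half_side rho <= x <= half_side rho ->
  exists k, (k < nstrips)%N /\ strip_lo k <= x <= strip_lo k + strip_h.
Proof.
move=> /andP[x1 x2]; have s0 := s_gt0; have [hK hs _ _] := strip_hP.
have K0 : (0 < nstrips)%N by apply: leq_trans nstrips_ge2.
have [k [kK k1 k2]] := @grid_index _ _ strip_h x _ ltac:(lra) K0 x1.
exists k; split => //; apply/andP; split => //.
rewrite /strip_lo; case: k2 => [e|]; last by rewrite -natr1 mulrDl mul1r; lra.
by move: hK; rewrite -e -natr1 mulrDl mul1r; lra.
Qed.

Lemma strip_ymaxP {k : nat} : (k < nstrips)%N ->
  [/\ 0 <= strip_ymax k, strip_ymax k <= half_side rho,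
      forall y, strip_lo k <= y <= strip_lo k + strip_h -> `|y| <= strip_ymax k
    & forall y, strip_lo k <= y <= strip_lo k + strip_h ->
        strip_ymax k <= `|y| + strip_h].
Proof.
move=> kK; have s0 := s_gt0; have [_ hs _ _] := strip_hP; have [l1 l2] := strip_lo_bounds kK.
rewrite /strip_ymax; set l := strip_lo k in l1 l2 *; set h := strip_h in hs l2 *.
split.
- by rewrite le_max normr_ge0.
- by rewrite ge_max !norm_le //; lra.
- move=> y /andP[y1 y2]; rewrite le_max.
  case: (lerP 0 y) => y0.
    by rewrite ger0_norm // (ger0_norm (_ : 0 <= l + h)) ?y2 ?orbT //; lra.
  by rewrite ltr0_norm // (ler0_norm (_ : l <= 0)) ?lerN2 ?y1 //; lra.
- move=> y /andP[y1 y2]; rewrite ge_max.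
  have n1 : `|l| <= `|y| + `|l - y| by rewrite -[X in `|X|](subrK y l) addrC ler_normD.
  have n2 : `|l + h| <= `|y| + `|l + h - y|.
    by rewrite -[X in `|X| <= _](subrK y (l + h)) addrC ler_normD.
  have n3 : `|l - y| <= h by apply: norm_le; lra.
  have n4 : `|l + h - y| <= h by apply: norm_le; lra.
  by apply/andP; split; lra.
Qed.

Lemma strip_halfwP {k : nat} : (k < nstrips)%N ->
  [/\ strip_halfw k ^+ 2 = rho ^+ 2 - strip_ymax k ^+ 2,
      half_side rho <= strip_halfw k & strip_halfw k <= rho].
Proof.
move=> kK; have [y0 ya _ _] := strip_ymaxP kK.
have a2 := half_side_sqr rho.
have y2 : strip_ymax k ^+ 2 <= half_side rho ^+ 2.
  by rewrite ler_pXn2r // ?nnegrE ?half_side_ge0.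
have r2 := sqr_ge0 rho; have y2' := sqr_ge0 (strip_ymax k).
rewrite /strip_halfw; split.
- by rewrite sqr_sqrtr //; lra.
- by apply: sqrtr_ge; [exact: half_side_ge0 | lra].
- by apply: sqrtr_le => //; lra.
Qed.

Lemma nrowP {k : nat} : (k < nstrips)%N ->
  [/\ (0 < nrow k)%N, (nrow k)%:R * row_w k = 2 * strip_halfw k,
      s <= row_w k & row_w k < 2 * s].
Proof.
have s0 := s_gt0; have sa := s_le_half_side.
move=> kK; have [_ aG _] := strip_halfwP kK.
have G0 : 0 <= strip_halfw k by have := half_side_ge0 rho; lra.
have t0 : 0 <= 2 * strip_halfw k / s by rewrite divr_ge0 ?mulr_ge0 // ltW.
have /andP[h1 h2] := truncn_itv t0.
rewrite -/(nrow k) ler_pdivlMr // in h1.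
rewrite -/(nrow k) ltr_pdivrMr // -natr1 mulrDl mul1r in h2.
have M2 : 2 <= (nrow k)%:R :> R.
  have : (2%:R : R) < (nrow k).+1%:R.
    by rewrite -natr1 -(ltr_pM2r s_gt0) mulrDl mul1r; lra.
  by rewrite ltr_nat ltnS -(ler_nat R).
rewrite /row_w; split.
- by rewrite -(ltr_nat R); lra.
- by rewrite mulrC divfK // pnatr_eq0 -lt0n -(ltr_nat R); lra.
- by rewrite ler_pdivlMr //; lra.
- by rewrite ltr_pdivrMr; lra.
Qed.

Lemma row_cutP {k : nat} : (k < nstrips)%N ->
  [/\ row_cut k 0 = - strip_halfw k, row_cut k (nrow k) = strip_halfw k
    & forall j, row_cut k j.+1 = row_cut k j + row_w k].
Proof.
move=> kK; have [_ hM _ _] := nrowP kK.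
rewrite /row_cut; split.
- by rewrite mul0r addr0.
- by rewrite hM; lra.
- by move=> j; rewrite -natr1 mulrDl mul1r addrA.
Qed.

Lemma row_cut_mono {k : nat} (i j : nat) : (k < nstrips)%N -> (i <= j)%N ->
  row_cut k i <= row_cut k j.
Proof.
move=> kK ij; have s0 := s_gt0; have [_ _ w1 _] := nrowP kK.
by rewrite /row_cut lerD2l ler_wpM2r ?ler_nat //; lra.
Qed.

Lemma strip_x_bound {k : nat} (p : R * R) : (k < nstrips)%N ->
  disk rho p -> strip_lo k <= p.2 <= strip_lo k + strip_h ->
  `|p.1| <= strip_halfw k + strip_h.
Proof.
move=> kK /(diskE _ _ rho_ge0) hp hy; have s0 := s_gt0.
have [y0 ya yabs yle] := strip_ymaxP kK.
have [G2 aG Gr] := strip_halfwP kK.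
have [_ hs _ _] := strip_hP.
have a0 := half_side_ge0 rho.
have u1 := yabs _ hy; have u2 := yle _ hy.
set y := p.2 in hp u1 u2; set Y := strip_ymax k in y0 ya u1 u2 G2.
set G := strip_halfw k in G2 aG Gr *; set h := strip_h in hs u2 *.
apply: le_of_sqr_le; first lra.
rewrite -normrX ger0_norm ?sqr_ge0 //.
have ny := normr_ge0 y.
have e1 : Y ^+ 2 <= (`|y| + h) ^+ 2 by rewrite ler_pXn2r // nnegrE; lra.
have e2 : `|y| ^+ 2 = y ^+ 2 by rewrite -normrX ger0_norm // sqr_ge0.
have e3 : `|y| * h <= G * h by rewrite ler_wpM2r //; lra.
nra.
Qed.

Lemma cap_topP {k : nat} : (k < nstrips)%N ->
  [/\ 0 <= cap_xmax k, cap_xmax k <= half_side rho - strip_h / 4,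
      cap_top k ^+ 2 = rho ^+ 2 - cap_xmax k ^+ 2,
      half_side rho + 3 * strip_h / 16 <= cap_top k & cap_top k <= rho].
Proof.
move=> kK; have s0 := s_gt0.
have [hK hs h2 ha] := strip_hP; have [l1 l2] := strip_lo_bounds kK.
have a0 := half_side_ge0 rho; have a2 := half_side_sqr rho.
have c1 : `|strip_mid k| <= half_side rho - strip_h / 2.
  by apply: norm_le; rewrite /strip_mid; lra.
have m0 : 0 <= cap_xmax k by rewrite /cap_xmax; have := normr_ge0 (strip_mid k); lra.
have m1 : cap_xmax k <= half_side rho - strip_h / 4 by rewrite /cap_xmax; lra.
have m2 : cap_xmax k ^+ 2 <= (half_side rho - strip_h / 4) ^+ 2.
  by rewrite ler_pXn2r // ?nnegrE; lra.
have r2 := sqr_ge0 rho.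
have am : cap_xmax k ^+ 2 <= rho ^+ 2.
  have : (half_side rho - strip_h / 4) ^+ 2 <= half_side rho ^+ 2.
    by rewrite ler_pXn2r // ?nnegrE; lra.
  lra.
split => //.
- by rewrite /cap_top sqr_sqrtr //; lra.
- apply: sqrtr_ge; first lra.
  set a := half_side rho in a0 a2 ha m2 *; set h := strip_h in hs ha m2 *.
  have q1 : h * (a - h) >= 0 by apply: mulr_ge0; lra.
  have q2 := sqr_ge0 h.
  have ex : (a + 3 * h / 16) ^+ 2 + (a - h / 4) ^+ 2
      = 2 * a ^+ 2 - h * (a - h) / 8 - 7 * h ^+ 2 / 256 by field.
  lra.
- by apply: sqrtr_le => //; have := sqr_ge0 (cap_xmax k); lra.
Qed.

Lemma ncapP {k : nat} : (k < nstrips)%N ->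
  [/\ (0 < ncap k)%N, (ncap k)%:R * cap_h k = cap_depth k,
      3 * s / 16 <= cap_h k & cap_h k <= s].
Proof.
move=> kK; have s0 := s_gt0.
have [hK hs h2 ha] := strip_hP; have [_ _ _ F1 _] := cap_topP kK.
have D1 : 3 * strip_h / 16 <= cap_depth k by rewrite /cap_depth; lra.
have D0 : 0 <= cap_depth k / s by rewrite divr_ge0 //; lra.
have /andP[t1 t2] := truncn_itv D0.
have Npos : 0 < (ncap k)%:R :> R by rewrite ltr0n.
have NE : (ncap k)%:R = (Num.truncn (cap_depth k / s))%:R + 1 :> R by rewrite -natr1.
have t2' : cap_depth k < (ncap k)%:R * s by rewrite -ltr_pdivrMr.
rewrite /cap_h; split => //.
- by rewrite mulrC divfK // lt0r_neq0.
- rewrite ler_pdivlMr //.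
  case: (ltrP (cap_depth k) s) => Ds.
    have T0 : Num.truncn (cap_depth k / s) = 0%N.
      have : (Num.truncn (cap_depth k / s))%:R < 1 :> R.
        by apply: le_lt_trans t1 _; rewrite ltr_pdivrMr // mul1r.
      by rewrite ltrn1 ltnS leqn0 => /eqP.
    by rewrite NE T0 add0r mulr1; lra.
  have t1' : (Num.truncn (cap_depth k / s))%:R * s <= cap_depth k by rewrite -ler_pdivlMr.
  have : (ncap k)%:R * s <= 2 * cap_depth k by rewrite NE mulrDl mul1r; lra.
  have ge : 0 <= (ncap k)%:R * s by apply: mulr_ge0; lra.
  have -> : 3 * s / 16 * (ncap k)%:R = 3 / 16 * ((ncap k)%:R * s) by ring.
  lra.
- by rewrite ler_pdivrMr //; lra.
Qed.

Lemma cap_topE {k : nat} : (k < nstrips)%N ->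
  cap_top k = half_side rho + (ncap k)%:R * cap_h k.
Proof. by move=> kK; have [_ -> _ _] := ncapP kK; rewrite /cap_depth; ring. Qed.

Lemma column_y_bound {k : nat} (p : R * R) : (k < nstrips)%N ->
  disk rho p -> strip_lo k <= p.1 <= strip_lo k + strip_h ->
  `|p.2| <= cap_top k + strip_h.
Proof.
move=> kK /(diskE _ _ rho_ge0) hp /andP[hx1 hx2]; have s0 := s_gt0.
have [hK hs h2 ha] := strip_hP; have [l1 l2] := strip_lo_bounds kK.
have [m0 m1 F2 F1 Fr] := cap_topP kK.
have a0 := half_side_ge0 rho.
have xa : `|p.1| <= half_side rho by apply: norm_le; lra.
have xc : `|p.1 - strip_mid k| <= strip_h / 2 by apply: norm_le; rewrite /strip_mid; lra.
have tri : `|strip_mid k| <= `|p.1| + `|p.1 - strip_mid k|.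
  by rewrite -[X in `|X| <= _](subrK p.1) addrC distrC ler_normD.
have nx := normr_ge0 p.1.
have mx2 : cap_xmax k ^+ 2 <= (`|p.1| + 3 * strip_h / 4) ^+ 2.
  by rewrite ler_pXn2r // ?nnegrE /cap_xmax; lra.
have e2 : `|p.1| ^+ 2 = p.1 ^+ 2 by rewrite -normrX ger0_norm // sqr_ge0.
apply: le_of_sqr_le; first lra.
rewrite -normrX ger0_norm ?sqr_ge0 //.
have e3 : `|p.1| * strip_h <= cap_top k * strip_h by rewrite ler_wpM2r //; lra.
have ex1 : (`|p.1| + 3 * strip_h / 4) ^+ 2
    = `|p.1| ^+ 2 + 3 / 2 * (`|p.1| * strip_h) + 9 / 16 * strip_h ^+ 2 by field.
have ex2 : (cap_top k + strip_h) ^+ 2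
    = cap_top k ^+ 2 + 2 * (cap_top k * strip_h) + strip_h ^+ 2 by ring.
have e4 : 0 <= `|p.1| * strip_h by apply: mulr_ge0; lra.
have e5 := sqr_ge0 strip_h.
lra.
Qed.

Definition mid_rect k j : rect R :=
  ((if j == 0%N then - rho else row_cut k j,
    if j.+1 == nrow k then rho else row_cut k j.+1),
   (strip_lo k, strip_lo k + strip_h)).

Definition top_rect k j : rect R :=
  ((strip_lo k, strip_lo k + strip_h),
   (half_side rho + j%:R * cap_h k,
    if j.+1 == ncap k then rho else half_side rho + j.+1%:R * cap_h k)).

Definition bot_rect k j : rect R :=
  ((strip_lo k, strip_lo k + strip_h),
   (if j.+1 == ncap k then - rho else - half_side rho - j.+1%:R * cap_h k,
    - half_side rho - j%:R * cap_h k)).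

(* The cell (c, k, j) lies in the middle part (c = 0), above (c = 1) or below
   (c = 2) the inscribed square, in strip k, at position j. *)
Definition cell_rect (c k j : nat) : rect R :=
  if c == 0%N then mid_rect k j else if c == 1%N then top_rect k j else bot_rect k j.

Definition cell_valid (c k j : nat) : bool :=
  if c == 0%N then (j < nrow k)%N else (j < ncap k)%N.

Lemma diam_mid_cell {k j : nat} (d : R) : (k < nstrips)%N ->
  0 <= d -> 40 * s ^+ 2 <= d ^+ 2 -> diam_le (disk rho `&` rect_set (mid_rect k j)) d.
Proof.
move=> kK d0 hd; have s0 := s_gt0.
have [hK hs h2 ha] := strip_hP.
have [_ _ w1 w2] := nrowP kK.
have [X0 XM XS] := row_cutP kK.
apply: (@diam_le_sub_box _ _ (row_cut k j - strip_h) (row_cut k j + row_w k + strip_h)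
  (strip_lo k) (strip_lo k + strip_h)) => //.
  move=> p [pd [/andP[px1 px2] /andP[py1 py2]]]; rewrite /= in px1 px2 py1 py2.
  split; last by rewrite py1 py2.
  have := strip_x_bound p kK pd (introT andP (conj py1 py2)).
  rewrite ler_norml => /andP[xb1 xb2].
  apply/andP; split.
    by move: px1; case: eqP => [-> _|_ h]; [rewrite X0; lra | lra].
  move: px2; case: eqP => [e _|_ h]; last by rewrite -XS; lra.
  have : row_cut k j.+1 = strip_halfw k by rewrite e XM.
  by rewrite XS; lra.
apply: le_trans hd; apply: le_trans (sqr_add_le _ _ (6 * s) (2 * s) _ _) _.
- by apply/andP; split; lra.
- by apply/andP; split; lra.
- by have -> : (6 * s) ^+ 2 + (2 * s) ^+ 2 = 40 * s ^+ 2 by ring.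
Qed.

Lemma diam_top_cell {k j : nat} (d : R) : (k < nstrips)%N ->
  0 <= d -> 40 * s ^+ 2 <= d ^+ 2 -> diam_le (disk rho `&` rect_set (top_rect k j)) d.
Proof.
move=> kK d0 hd; have s0 := s_gt0.
have [hK hs h2 ha] := strip_hP.
have [_ _ v1 v2] := ncapP kK.
apply: (@diam_le_sub_box _ _ (strip_lo k) (strip_lo k + strip_h)
  (half_side rho + j%:R * cap_h k) (half_side rho + j%:R * cap_h k + cap_h k + strip_h)) => //.
  move=> p [pd [/andP[px1 px2] /andP[py1 py2]]]; rewrite /= in px1 px2 py1 py2.
  split; first by rewrite px1 px2.
  rewrite py1 /=.
  move: py2; case: eqP => [e _|_ h]; last by move: h; rewrite -natr1 mulrDl mul1r; lra.
  have := column_y_bound p kK pd (introT andP (conj px1 px2)).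
  rewrite (cap_topE kK) -e -natr1 mulrDl mul1r; have := ler_norm p.2; lra.
apply: le_trans hd; apply: le_trans (sqr_add_le _ _ (2 * s) (3 * s) _ _) _.
- by apply/andP; split; lra.
- by apply/andP; split; lra.
- have -> : (2 * s) ^+ 2 + (3 * s) ^+ 2 = 13 * s ^+ 2 by ring.
  by have := sqr_ge0 s; lra.
Qed.

Lemma diam_bot_cell {k j : nat} (d : R) : (k < nstrips)%N ->
  0 <= d -> 40 * s ^+ 2 <= d ^+ 2 -> diam_le (disk rho `&` rect_set (bot_rect k j)) d.
Proof.
move=> kK d0 hd; have s0 := s_gt0.
have [hK hs h2 ha] := strip_hP.
have [_ _ v1 v2] := ncapP kK.
apply: (@diam_le_sub_box _ _ (strip_lo k) (strip_lo k + strip_h)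
  (- half_side rho - j%:R * cap_h k - cap_h k - strip_h) (- half_side rho - j%:R * cap_h k)) => //.
  move=> p [pd [/andP[px1 px2] /andP[py1 py2]]]; rewrite /= in px1 px2 py1 py2.
  split; first by rewrite px1 px2.
  rewrite py2 andbT.
  move: py1; case: eqP => [e _|_ h]; last by move: h; rewrite -natr1 mulrDl mul1r; lra.
  have := column_y_bound p kK pd (introT andP (conj px1 px2)).
  rewrite (cap_topE kK) -e -natr1 mulrDl mul1r.
  by have := ler_norm (- p.2); rewrite normrN; lra.
apply: le_trans hd; apply: le_trans (sqr_add_le _ _ (2 * s) (3 * s) _ _) _.
- by apply/andP; split; lra.
- by apply/andP; split; lra.
- have -> : (2 * s) ^+ 2 + (3 * s) ^+ 2 = 13 * s ^+ 2 by ring.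
  by have := sqr_ge0 s; lra.
Qed.

Lemma area_mid_cell {k j : nat} : (k < nstrips)%N -> (j < nrow k)%N ->
  ((3 * s ^+ 2 / 32)%:E <= area (disk rho `&` rect_set (mid_rect k j)))%E.
Proof.
move=> kK jM; have s0 := s_gt0.
have [hK hs h2 ha] := strip_hP.
have [_ _ w1 w2] := nrowP kK.
have [X0 XM XS] := row_cutP kK.
have [G2 aG Gr] := strip_halfwP kK.
have [y0 ya yabs _] := strip_ymaxP kK.
have Xl : - strip_halfw k <= row_cut k j by rewrite -X0; apply: row_cut_mono.
have Xu : row_cut k j + row_w k <= strip_halfw k by rewrite -XS -XM; apply: row_cut_mono.
apply: (@area_ge_box _ _ (row_cut k j) (row_cut k j + row_w k)
  (strip_lo k) (strip_lo k + strip_h)); [exact: measurable_disk_rect | | lra | lra |].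
- move=> q [/andP[q1 q2] /andP[q3 q4]]; split.
    apply/(diskE _ _ rho_ge0).
    have e1 : q.1 ^+ 2 <= strip_halfw k ^+ 2 by apply/sqr_le_of_norm_le/norm_le; lra.
    have e2 : q.2 ^+ 2 <= strip_ymax k ^+ 2 by apply/sqr_le_of_norm_le/yabs; rewrite q3 q4.
    lra.
  rewrite /rect_set /mid_rect /box /= q3 q4; split => //; apply/andP; split.
    by case: eqP => _; lra.
  by case: eqP => _; [lra | rewrite XS].
- have -> : row_cut k j + row_w k - row_cut k j = row_w k by ring.
  have -> : strip_lo k + strip_h - strip_lo k = strip_h by ring.
  have hp : s * s <= row_w k * strip_h by apply: ler_pM; lra.
  by have := sqr_ge0 s; rewrite expr2 in hp *; lra.
Qed.

Lemma cap_box_in_disk {k j : nat} {x y : R} : (k < nstrips)%N -> (j < ncap k)%N ->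
  strip_mid k - strip_h / 4 <= x <= strip_mid k + strip_h / 4 ->
  half_side rho + j%:R * cap_h k <= y <= half_side rho + j%:R * cap_h k + cap_h k ->
  [/\ x ^+ 2 + y ^+ 2 <= rho ^+ 2, strip_lo k <= x <= strip_lo k + strip_h
    & y <= cap_top k].
Proof.
move=> kK jN /andP[x1 x2] /andP[y1 y2]; have s0 := s_gt0.
have [hK hs h2 ha] := strip_hP.
have [_ NV v1 v2] := ncapP kK.
have [m0 m1 F2 F1 Fr] := cap_topP kK.
have a0 := half_side_ge0 rho.
have yF : y <= cap_top k.
  have : j.+1%:R * cap_h k <= (ncap k)%:R * cap_h k by rewrite ler_wpM2r ?ler_nat //; lra.
  by rewrite (cap_topE kK) -natr1 mulrDl mul1r; lra.
have jv : 0 <= j%:R * cap_h k by apply: mulr_ge0 => //; lra.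
split => //.
- have e1 : x ^+ 2 <= cap_xmax k ^+ 2.
    apply: sqr_le_of_norm_le; rewrite /cap_xmax.
    have dx : `|x - strip_mid k| <= strip_h / 4 by apply: norm_le; lra.
    have : `|x| <= `|strip_mid k| + `|x - strip_mid k|.
      by rewrite -[X in `|X| <= _](subrK (strip_mid k) x) addrC ler_normD.
    lra.
  have e2 : y ^+ 2 <= cap_top k ^+ 2 by apply/sqr_le_of_norm_le/norm_le; lra.
  lra.
- by rewrite /strip_mid in x1 x2; apply/andP; split; lra.
Qed.

Lemma area_top_cell {k j : nat} : (k < nstrips)%N -> (j < ncap k)%N ->
  ((3 * s ^+ 2 / 32)%:E <= area (disk rho `&` rect_set (top_rect k j)))%E.
Proof.
move=> kK jN; have s0 := s_gt0.
have [hK hs h2 ha] := strip_hP.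
have [_ _ v1 v2] := ncapP kK.
have [_ _ _ _ Fr] := cap_topP kK.
apply: (@area_ge_box _ _ (strip_mid k - strip_h / 4) (strip_mid k + strip_h / 4)
  (half_side rho + j%:R * cap_h k) (half_side rho + j%:R * cap_h k + cap_h k));
  [exact: measurable_disk_rect | | lra | lra |].
- move=> q [hx hy].
  have [D X Y] := cap_box_in_disk kK jN hx hy.
  case/andP: hy => y1 y2.
  split; first by apply/(diskE _ _ rho_ge0).
  rewrite /rect_set /top_rect /box /= X y1; split => //.
  by case: eqP => _; [lra | rewrite -natr1 mulrDl mul1r; lra].
- have -> : strip_mid k + strip_h / 4 - (strip_mid k - strip_h / 4) = strip_h / 2 by field.
  have -> : half_side rho + j%:R * cap_h k + cap_h k - (half_side rho + j%:R * cap_h k)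
    = cap_h k by ring.
  have -> : 3 * s ^+ 2 / 32 = s / 2 * (3 * s / 16) by field.
  by apply: ler_pM; lra.
Qed.

Lemma area_bot_cell {k j : nat} : (k < nstrips)%N -> (j < ncap k)%N ->
  ((3 * s ^+ 2 / 32)%:E <= area (disk rho `&` rect_set (bot_rect k j)))%E.
Proof.
move=> kK jN; have s0 := s_gt0.
have [hK hs h2 ha] := strip_hP.
have [_ _ v1 v2] := ncapP kK.
have [_ _ _ _ Fr] := cap_topP kK.
apply: (@area_ge_box _ _ (strip_mid k - strip_h / 4) (strip_mid k + strip_h / 4)
  (- half_side rho - j%:R * cap_h k - cap_h k) (- half_side rho - j%:R * cap_h k));
  [exact: measurable_disk_rect | | lra | lra |].
- move=> q [hx hy].
  have hy' : half_side rho + j%:R * cap_h k <= - q.2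
      <= half_side rho + j%:R * cap_h k + cap_h k.
    by case/andP: hy => y1 y2; apply/andP; split; lra.
  have [D X Y] := cap_box_in_disk kK jN hx hy'.
  case/andP: hy => y1 y2.
  split; first by apply/(diskE _ _ rho_ge0); rewrite sqrrN in D.
  rewrite /rect_set /bot_rect /box /= X y2 andbT; split => //.
  by case: eqP => _; [lra | rewrite -natr1 mulrDl mul1r; lra].
- have -> : strip_mid k + strip_h / 4 - (strip_mid k - strip_h / 4) = strip_h / 2 by field.
  have -> : - half_side rho - j%:R * cap_h k - (- half_side rho - j%:R * cap_h k - cap_h k)
    = cap_h k by ring.
  have -> : 3 * s ^+ 2 / 32 = s / 2 * (3 * s / 16) by field.
  by apply: ler_pM; lra.
Qed.

Lemma apart_mid_strips {k k' : nat} (j j' : nat) : (k < k')%N ->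
  apart (mid_rect k j) (mid_rect k' j').
Proof. by move=> kk; right; right; left; exact: strip_lo_lt. Qed.

Lemma apart_top_strips {k k' : nat} (j j' : nat) : (k < k')%N ->
  apart (top_rect k j) (top_rect k' j').
Proof. by move=> kk; left; exact: strip_lo_lt. Qed.

Lemma apart_bot_strips {k k' : nat} (j j' : nat) : (k < k')%N ->
  apart (bot_rect k j) (bot_rect k' j').
Proof. by move=> kk; left; exact: strip_lo_lt. Qed.

Lemma apart_mid_row {k j j' : nat} : (k < nstrips)%N -> (j < j')%N -> (j' < nrow k)%N ->
  apart (mid_rect k j) (mid_rect k j').
Proof.
move=> kK jj jM; left => /=.
rewrite (ltn_eqF (leq_ltn_trans jj jM)) (gtn_eqF (leq_ltn_trans (leq0n j) jj)).
exact: row_cut_mono.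
Qed.

Lemma apart_top_row {k j j' : nat} : (k < nstrips)%N -> (j < j')%N -> (j' < ncap k)%N ->
  apart (top_rect k j) (top_rect k j').
Proof.
move=> kK jj jN; right; right; left => /=.
rewrite (ltn_eqF (leq_ltn_trans jj jN)).
have s0 := s_gt0; have [_ _ v1 _] := ncapP kK.
by rewrite lerD2l ler_wpM2r ?ler_nat //; lra.
Qed.

Lemma apart_bot_row {k j j' : nat} : (k < nstrips)%N -> (j < j')%N -> (j' < ncap k)%N ->
  apart (bot_rect k j) (bot_rect k j').
Proof.
move=> kK jj jN; right; right; right => /=.
rewrite (ltn_eqF (leq_ltn_trans jj jN)).
have s0 := s_gt0; have [_ _ v1 _] := ncapP kK.
have : j.+1%:R * cap_h k <= j'%:R * cap_h k by rewrite ler_wpM2r ?ler_nat //; lra.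
lra.
Qed.

Lemma apart_mid_top {k k' : nat} (j j' : nat) : (k < nstrips)%N -> (k' < nstrips)%N ->
  apart (mid_rect k j) (top_rect k' j').
Proof.
move=> kK kK'; right; right; left => /=; have s0 := s_gt0.
have [_ l2] := strip_lo_bounds kK; have [_ _ v1 _] := ncapP kK'.
have : 0 <= j'%:R * cap_h k' by apply: mulr_ge0 => //; lra.
lra.
Qed.

Lemma apart_mid_bot {k k' : nat} (j j' : nat) : (k < nstrips)%N -> (k' < nstrips)%N ->
  apart (mid_rect k j) (bot_rect k' j').
Proof.
move=> kK kK'; right; right; right => /=; have s0 := s_gt0.
have [l1 _] := strip_lo_bounds kK; have [_ _ v1 _] := ncapP kK'.
have : 0 <= j'%:R * cap_h k' by apply: mulr_ge0 => //; lra.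
lra.
Qed.

Lemma apart_top_bot {k k' : nat} (j j' : nat) : (k < nstrips)%N -> (k' < nstrips)%N ->
  apart (top_rect k j) (bot_rect k' j').
Proof.
move=> kK kK'; right; right; right => /=; have s0 := s_gt0.
have [_ _ v1 _] := ncapP kK; have [_ _ v1' _] := ncapP kK'.
have : 0 <= j%:R * cap_h k by apply: mulr_ge0 => //; lra.
have : 0 <= j'%:R * cap_h k' by apply: mulr_ge0 => //; lra.
have := half_side_ge0 rho; lra.
Qed.

Lemma apart_cells_lt {c k j c' k' j' : nat} : (c < 3)%N -> (c' < 3)%N ->
  (k < nstrips)%N -> (k' < nstrips)%N -> cell_valid c k j -> cell_valid c' k' j' ->
  (c < c')%N \/ (c = c' /\ ((k < k')%N \/ (k = k' /\ (j < j')%N))) ->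
  apart (cell_rect c k j) (cell_rect c' k' j').
Proof.
move=> c3 c3' kK kK' v v' [cc'|[ec [kk|[ek jj]]]].
- move: c3 c3' cc' v v'; rewrite /cell_rect /cell_valid.
  case: c => [|[|[|c]]] //; case: c' => [|[|[|c']]] // _ _ _ _ _.
  + exact: apart_mid_top.
  + exact: apart_mid_bot.
  + exact: apart_top_bot.
- clear c3'; subst c'; move: c3 v v'; rewrite /cell_rect /cell_valid.
  case: c => [|[|[|c]]] // _ _ _.
  + exact: apart_mid_strips.
  + exact: apart_top_strips.
  + exact: apart_bot_strips.
- clear c3' kK'; subst c' k'; move: c3 v v'; rewrite /cell_rect /cell_valid.
  case: c => [|[|[|c]]] // _ _ v'.
  + exact: apart_mid_row.
  + exact: apart_top_row.
  + exact: apart_bot_row.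
Qed.

Lemma apart_cells {c k j c' k' j' : nat} : (c < 3)%N -> (c' < 3)%N ->
  (k < nstrips)%N -> (k' < nstrips)%N -> cell_valid c k j -> cell_valid c' k' j' ->
  (c, k, j) != (c', k', j') -> apart (cell_rect c k j) (cell_rect c' k' j').
Proof.
move=> c3 c3' kK kK' v v' ne.
have [cc'|c'c|ec] := ltngtP c c'.
- by apply: apart_cells_lt => //; left.
- by apply/apart_sym/apart_cells_lt => //; left.
move: c3' v' ne; rewrite -ec => c3' v' ne.
have [kk|k'k|ek] := ltngtP k k'.
- by apply: apart_cells_lt => //; right; split => //; left.
- by apply/apart_sym/apart_cells_lt => //; right; split => //; left.
move: kK' v' ne; rewrite -ek => kK' v' ne.
have [jj|j'j|ej] := ltngtP j j'.
- by apply: apart_cells_lt => //; right; split => //; right.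
- by apply/apart_sym/apart_cells_lt => //; right; split => //; right.
by rewrite ej eqxx in ne.
Qed.

Lemma mid_cells_cover {p : R * R} : disk rho p -> `|p.2| <= half_side rho ->
  exists k j, [/\ (k < nstrips)%N, (j < nrow k)%N & rect_set (mid_rect k j) p].
Proof.
move=> pd; rewrite ler_norml => hy; have s0 := s_gt0.
have [k [kK /andP[k1 k2]]] := strip_index hy.
have [M1 _ w1 _] := nrowP kK; have [X0 _ XS] := row_cutP kK.
have [+ _] := disk_norm_le _ _ rho_ge0 pd; rewrite ler_norml => /andP[x1 x2].
have [j [jM j1 j2]] : exists j, [/\ (j < nrow k)%N,
    (j == 0%N) || (row_cut k j <= p.1) & (j.+1 == nrow k) || (p.1 <= row_cut k j.+1)].
  case: (ltrP p.1 (- strip_halfw k)) => hx.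
    exists 0%N; split => //; apply/orP; right.
    by have := row_cut_mono 0 1 kK isT; rewrite X0; lra.
  have [j [jM j1 j2]] := grid_index (- strip_halfw k) (row_w k) p.1 (nrow k) ltac:(lra) M1 hx.
  exists j; split => //; first by apply/orP; right.
  by case: j2 => [->|h]; apply/orP; [left | right].
exists k, j; split => //.
rewrite /rect_set /mid_rect /box /= k1 k2; split => //; apply/andP; split.
  by case: eqP => [_|ne]; [lra | move: j1; case: eqP].
by case: eqP => [_|ne]; [lra | move: j2; case: eqP].
Qed.

Lemma cap_x_bound {p : R * R} : disk rho p -> half_side rho < `|p.2| ->
  - half_side rho <= p.1 <= half_side rho.
Proof.
move=> /(diskE _ _ rho_ge0) hp hy; rewrite -ler_norml.
have a0 := half_side_ge0 rho; have a2 := half_side_sqr rho.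
apply: le_of_sqr_le => //; rewrite -normrX ger0_norm ?sqr_ge0 //.
have : half_side rho ^+ 2 <= `|p.2| ^+ 2 by rewrite ler_pXn2r // ?nnegrE //; lra.
by rewrite -normrX ger0_norm ?sqr_ge0 //; lra.
Qed.

Lemma top_cells_cover {p : R * R} : disk rho p -> half_side rho < p.2 ->
  exists k j, [/\ (k < nstrips)%N, (j < ncap k)%N & rect_set (top_rect k j) p].
Proof.
move=> pd hy; have s0 := s_gt0.
have [k [kK /andP[k1 k2]]] := strip_index (cap_x_bound pd (lt_le_trans hy (ler_norm _))).
have [N1 _ v1 _] := ncapP kK.
have [_ +] := disk_norm_le _ _ rho_ge0 pd; rewrite ler_norml => /andP[y1 y2].
have [j [jN j1 j2]] := grid_index (half_side rho) (cap_h k) p.2 (ncap k) ltac:(lra) N1 (ltW hy).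
exists k, j; split => //.
rewrite /rect_set /top_rect /box /= k1 k2 j1; split => //.
by case: eqP => // ne; case: j2.
Qed.

Lemma bot_cells_cover {p : R * R} : disk rho p -> half_side rho < - p.2 ->
  exists k j, [/\ (k < nstrips)%N, (j < ncap k)%N & rect_set (bot_rect k j) p].
Proof.
move=> pd hy; have s0 := s_gt0.
have hy' : half_side rho < `|p.2| by rewrite -normrN (lt_le_trans hy (ler_norm _)).
have [k [kK /andP[k1 k2]]] := strip_index (cap_x_bound pd hy').
have [N1 _ v1 _] := ncapP kK.
have [_ +] := disk_norm_le _ _ rho_ge0 pd; rewrite ler_norml => /andP[y1 y2].
have [j [jN j1 j2]] := grid_index (half_side rho) (cap_h k) (- p.2) (ncap k)
  ltac:(lra) N1 (ltW hy).
exists k, j; split => //.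
rewrite /rect_set /bot_rect /box /= k1 k2; split => //; apply/andP; split; last by lra.
by case: eqP => // ne; case: j2 => // h; lra.
Qed.

Lemma disk_covered {p : R * R} : disk rho p -> exists c k j,
  [/\ (c < 3)%N, (k < nstrips)%N, cell_valid c k j & rect_set (cell_rect c k j) p].
Proof.
move=> pd; case: (lerP `|p.2| (half_side rho)) => hy.
  by have [k [j [kK jM pc]]] := mid_cells_cover pd hy; exists 0%N, k, j.
case: (lerP 0 p.2) => y0.
  rewrite ger0_norm // in hy.
  by have [k [j [kK jN pc]]] := top_cells_cover pd hy; exists 1%N, k, j.
rewrite ltr0_norm // in hy.
by have [k [j [kK jN pc]]] := bot_cells_cover pd hy; exists 2%N, k, j.
Qed.

Lemma diam_cell {c k j : nat} (d : R) : (k < nstrips)%N ->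
  0 <= d -> 40 * s ^+ 2 <= d ^+ 2 -> diam_le (disk rho `&` rect_set (cell_rect c k j)) d.
Proof.
move=> kK; rewrite /cell_rect; case: ifP => _; first exact: diam_mid_cell.
by case: ifP => _; [exact: diam_top_cell | exact: diam_bot_cell].
Qed.

Lemma area_cell {c k j : nat} : (k < nstrips)%N -> cell_valid c k j ->
  ((3 * s ^+ 2 / 32)%:E <= area (disk rho `&` rect_set (cell_rect c k j)))%E.
Proof.
move=> kK; rewrite /cell_valid /cell_rect; case: ifP => _ v; first exact: area_mid_cell.
by case: ifP => _; [exact: area_top_cell | exact: area_bot_cell].
Qed.

Definition max_cells : nat := \max_(k < nstrips) (nrow k + ncap k).

Lemma cell_valid_lt {c k j : nat} (kK : (k < nstrips)%N) :
  cell_valid c k j -> (j < max_cells)%N.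
Proof.
move=> v; apply: leq_trans (leq_bigmax_cond (Ordinal kK) isT); move: v; rewrite /cell_valid.
by case: ifP => _ /leq_trans; apply; [exact: leq_addr | exact: leq_addl].
Qed.

Lemma disk_grid_partition (d : R) : 0 <= d -> 40 * s ^+ 2 <= d ^+ 2 ->
  exists (n : nat) (C : 'I_n -> set (R * R)),
    [/\ \bigcup_(i in [set: 'I_n]) C i = disk rho,
        (forall i j, i != j -> interior2 (C i) `&` interior2 (C j) = set0) &
        forall i, [/\ convex2 (C i), measurable (C i), diam_le (C i) d &
                      ((3 * s ^+ 2 / 32)%:E <= area (C i))%E]].
Proof.
move=> d0 hd.
pose T := {t : 'I_3 * 'I_nstrips * 'I_max_cells | cell_valid t.1.1 t.1.2 t.2}.
pose cell (t : T) := disk rho `&` rect_set (cell_rect (val t).1.1 (val t).1.2 (val t).2).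
exists #|{: T}|, (fun i => cell (enum_val i)); split.
- apply/seteqP; split => [p [i _ []] // | p pd].
  have [c [k [j [c3 kK v pc]]]] := disk_covered pd.
  pose t : T := exist _ (Ordinal c3, Ordinal kK, Ordinal (cell_valid_lt kK v)) v.
  by exists (enum_rank t) => //; rewrite /cell enum_rankK.
- move=> i j ne; rewrite /cell; apply: interior2_disk_rect_disjoint.
  have : enum_val i != enum_val j by apply: contra ne => /eqP /enum_val_inj ->.
  case: (enum_val i) => [[[c k] l] v]; case: (enum_val j) => [[[c' k'] l'] v'] ne' /=.
  by apply: apart_cells.
- move=> i; rewrite /cell; case: (enum_val i) => [[[c k] l] v] /=; split.
  + by apply: convex2I; [exact: convex2_disk | exact: convex2_box].
  + exact: measurable_disk_rect.
  + exact: diam_cell.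
  + exact: area_cell.
Qed.

End Grid.

Theorem lemmaC1 (R : realType) (w rho : R) (hw : 0 < w) (hrho : 2 * w <= rho) :
  exists (n : nat) (C : 'I_n -> set (R * R)),
    [/\ \bigcup_(i in [set: 'I_n]) C i = disk rho,
        (forall i j, i != j -> interior2 (C i) `&` interior2 (C j) = set0) &
        forall i, [/\ convex2 (C i), measurable (C i),
                      diam_le (C i) (8 * w) &
                      ((w ^+ 2 / 8)%:E <= area (C i))%E]].
Proof.
pose s := 5 * w / 4.
have s0 : 0 < s by rewrite /s; lra.
have r0 : 0 <= rho by lra.
have w2 := sqr_ge0 w.
have s2 : s ^+ 2 = 25 / 16 * w ^+ 2 by rewrite /s; field.
have sa : s <= half_side rho.
  apply: le_of_sqr_le; first exact: half_side_ge0.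
  have : (2 * w) ^+ 2 <= rho ^+ 2 by rewrite ler_pXn2r // nnegrE; lra.
  by rewrite half_side_sqr s2 exprMn; lra.
have hd : 40 * s ^+ 2 <= (8 * w) ^+ 2 by rewrite s2 exprMn; lra.
have d0 : 0 <= 8 * w by lra.
have [n [C [cover disj cellP]]] := disk_grid_partition _ _ s0 sa r0 _ d0 hd.
exists n, C; split => // i; have [? ? ? area_i] := cellP i; split => //.
by apply: le_trans area_i; rewrite lee_fin s2; lra.
Qed.
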